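(* Let $H$ be a real vector space of dimension $d+1$ with $d\ge1$, and $q$ a quadratic form on $H$ of signature $(1,d)$. Let $A\subset H$ be a discrete subset such that for some constant $M>0$ we have $q(x)\ge -M$ for all $x\in A$, and suppose there is a proper subspace $H_0\subsetneq H$ with $A\subset H_0$. Let $u\in H\setminus H_0$ with $q(u)=0$. Then there is an open neighbourhood $U$ of $u$ in $H$ such that $U\cap x^\perp\ne\emptyset$ for only finitely many $x\in A$.
   Context: $x^\perp$ denotes the $q$-orthogonal complement of $x$ in $H$. *)

From HB Require Import structures.
From mathcomp Require Import all_boot all_order all_algebra.
From mathcomp Require Import all_classical all_reals all_analysis.
Set Implicit Arguments. Unset Strict Implicit. Unset Printing Implicit Defensive.
Import Order.TTheory GRing.Theory Num.Theory.
Import numFieldNormedType.Exports.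
Local Open Scope classical_set_scope.
Local Open Scope ring_scope.

(* H = R^(n) realised as row vectors 'rV[R]_n.  A quadratic form on H is
   given by a symmetric matrix Q: q(x) = x Q x^T; its polar bilinear form is
   b(x,y) = x Q y^T. *)
Definition bil (R : realType) (n : nat) (Q : 'M[R]_n) (x y : 'rV[R]_n) : R :=
  (x *m Q *m y^T) 0 0.

Definition qf (R : realType) (n : nat) (Q : 'M[R]_n) (x : 'rV[R]_n) : R :=
  bil Q x x.

Definition qperp (R : realType) (n : nat) (Q : 'M[R]_n) (x : 'rV[R]_n)
  : set 'rV[R]_n := [set y | bil Q x y = 0].

(* signature (1,d) on R^(d+1): by Sylvester, there is a basis (rows of an
   invertible P) in which q = x_0^2 - x_1^2 - ... - x_d^2. *)
Definition signature_1_d (R : realType) (d : nat) (Q : 'M[R]_(d.+1)) : Prop :=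
  Q^T = Q /\
  exists P : 'M[R]_(d.+1), P \in unitmx /\
    P *m Q *m P^T = \matrix_(i, j) (if i == j then (if i == ord0 then 1 else -1) else 0).

(* discrete subset of H: locally finite (no accumulation point in H) *)
Definition discrete_subset (R : realType) (n : nat) (A : set 'rV[R]_n) : Prop :=
  forall p : 'rV[R]_n, exists V, nbhs p V /\ finite_set (A `&` V).

From HB Require Import structures.
From mathcomp Require Import all_boot all_order all_algebra.
From mathcomp Require Import all_classical all_reals all_analysis.
From mathcomp Require Import finmap ring lra.
Set Implicit Arguments. Unset Strict Implicit. Unset Printing Implicit Defensive.
Import Order.TTheory GRing.Theory Num.Theory.
Import numFieldNormedType.Exports.
Local Open Scope classical_set_scope.
Local Open Scope ring_scope.

(* In coordinates where q = t^2 - s, with s positive definite on the hyperplane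
   t = 0, an isotropic u outside H0 has t(u) <> 0, so each x splits as
   x = w + a u with t(w) = 0 and a = t(x) / t(u); then
   -q(w) = s(w) = 2 a b(x, u) - q(x).  As u is not in H0, |x| <= C |w| on H0,
   so |x|^2 <= L (-q(w)).  If moreover b(x, y) = 0 for some y close to u, then
   b(x, u) = b(x, u - y) and a = O(|x|) make the cross term at most |x|^2 / 2L,
   whence |x|^2 <= 2L (-q(x)) <= 2L M: only finitely many points of the
   discrete set A qualify. *)

Section MatrixNorm.
Variable R : realType.

Lemma mxentry_le_norm m n (A : 'M[R]_(m, n)) i j : `|A i j| <= `|A|.
Proof.
have /mapP[k _ ->] : `|A i j| \in [seq `|A ij.1 ij.2| | ij : 'I_m * 'I_n].
  by apply/mapP; exists (i, j); rewrite ?mem_enum.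
by rewrite [leRHS]/Num.Def.normr /= mx_normrE; apply/bigmax_geP; right; exists k.
Qed.

Lemma mx_norm_le m n (A : 'M[R]_(m, n)) r :
  0 <= r -> (forall i j, `|A i j| <= r) -> `|A| <= r.
Proof.
move=> r0 Ar; rewrite [leLHS]/Num.Def.normr /= mx_normrE.
by apply: bigmax_le => // -[i j] _; exact: Ar.
Qed.

Lemma mx_norm_trmx m n (A : 'M[R]_(m, n)) : `|A^T| = `|A|.
Proof.
suff le_tr k l (B : 'M[R]_(k, l)) : `|B^T| <= `|B|.
  by apply/eqP; rewrite eq_le le_tr -{1}(trmxK A) le_tr.
by apply: mx_norm_le => // i j; rewrite mxE mxentry_le_norm.
Qed.

Lemma mulmx_norm_le m n p (A : 'M[R]_(m, n)) (B : 'M[R]_(n, p)) :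
  `|A *m B| <= n%:R * `|A| * `|B|.
Proof.
apply: mx_norm_le => [|i j]; first by rewrite !mulr_ge0.
rewrite mxE; apply: le_trans (ler_norm_sum _ _ _) _.
apply: le_trans (_ : \sum_(k < n) `|A| * `|B| <= _).
  by apply: ler_sum => k _; rewrite normrM ler_pM ?mxentry_le_norm.
by rewrite sumr_const card_ord -mulrA mulr_natl.
Qed.

Lemma rowv_norm_sqr_le n (v : 'rV[R]_n) : `|v| ^+ 2 <= \sum_k v 0 k ^+ 2.
Proof.
rewrite -[X in X ^+ 2]/(mx_norm v).
have [->|/mx_norm_neq0[[i k] /= ->]] := eqVneq (mx_norm v) 0.
  by rewrite expr0n sumr_ge0 // => k _; rewrite sqr_ge0.
rewrite (ord1 i) real_normK ?num_real //= (bigD1 k) //= lerDl.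
by rewrite sumr_ge0 // => l _; rewrite sqr_ge0.
Qed.

End MatrixNorm.

Section Bilinear.
Variables (R : realType) (n : nat) (Q : 'M[R]_n).

Lemma bilBl x y z : bil Q (x - y) z = bil Q x z - bil Q y z.
Proof. by rewrite /bil !mulmxBl !mxE. Qed.

Lemma bilZl x y a : bil Q (a *: x) y = a * bil Q x y.
Proof. by rewrite /bil -!scalemxAl mxE. Qed.

Lemma bilBr x y z : bil Q x (y - z) = bil Q x y - bil Q x z.
Proof. by rewrite /bil (raddfB trmx) mulmxBr !mxE. Qed.

Lemma bilZr x y a : bil Q x (a *: y) = a * bil Q x y.
Proof. by rewrite /bil linearZ /= -scalemxAr mxE. Qed.

Lemma bil_norm_le x y : `|bil Q x y| <= n%:R ^+ 2 * `|Q| * (`|x| * `|y|).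
Proof.
rewrite /bil; apply: le_trans (mxentry_le_norm _ 0 0) _.
apply: le_trans (mulmx_norm_le _ _) _; rewrite mx_norm_trmx.
have -> : n%:R ^+ 2 * `|Q| * (`|x| * `|y|) = n%:R * (n%:R * `|x| * `|Q|) * `|y|.
  by ring.
by rewrite ler_wpM2r // ler_wpM2l // mulmx_norm_le.
Qed.

Hypothesis symQ : Q^T = Q.

Lemma bilC x y : bil Q x y = bil Q y x.
Proof.
have -> : bil Q x y = (x *m Q *m y^T)^T 0 0 by rewrite mxE.
by rewrite !trmx_mul trmxK symQ mulmxA.
Qed.

Lemma qf_subZ x y a :
  qf Q (x - a *: y) = qf Q x - 2 * a * bil Q x y + a ^+ 2 * qf Q y.
Proof.
by rewrite /qf !(bilBl, bilBr, bilZl, bilZr) (bilC y x); ring.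
Qed.

End Bilinear.

Section SylvesterCoordinates.
Variables (R : realType) (n : nat) (Q P : 'M[R]_n.+1).

Definition time_coord (x : 'rV[R]_n.+1) : R := (x *m invmx P) 0 ord0.

Definition space_sqnorm (x : 'rV[R]_n.+1) : R :=
  \sum_(k < n) (x *m invmx P) 0 (lift ord0 k) ^+ 2.

Lemma time_coord_subZ x y a :
  time_coord (x - a *: y) = time_coord x - a * time_coord y.
Proof. by rewrite /time_coord mulmxBl -scalemxAl !mxE. Qed.

Lemma time_coord_norm_le x : `|time_coord x| <= n.+1%:R * `|invmx P| * `|x|.
Proof.
apply: le_trans (mxentry_le_norm _ _ _) _.
by rewrite mulrAC mulmx_norm_le.
Qed.

Hypothesis P_unit : P \in unitmx.

Lemma norm_sqr_le_coord x :
  `|x| ^+ 2 <= (n.+1%:R * `|P|) ^+ 2 * (time_coord x ^+ 2 + space_sqnorm x).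
Proof.
set c := x *m invmx P.
have normx : `|x| <= n.+1%:R * `|P| * `|c|.
  by rewrite -{1}(mulmxKV P_unit x) mulrAC mulmx_norm_le.
have normc : `|c| ^+ 2 <= time_coord x ^+ 2 + space_sqnorm x.
  by apply: le_trans (rowv_norm_sqr_le c) _; rewrite big_ord_recl.
apply: le_trans (_ : (n.+1%:R * `|P| * `|c|) ^+ 2 <= _).
  by rewrite lerXn2r ?nnegrE.
by rewrite exprMn ler_wpM2l ?sqr_ge0.
Qed.

Hypothesis QP_sylvester : P *m Q *m P^T =
  \matrix_(i, j) (if i == j then (if i == ord0 then 1 else -1) else 0).

Lemma qf_coord x : qf Q x = time_coord x ^+ 2 - space_sqnorm x.
Proof.
set c := x *m invmx P.
have -> : qf Q x = (c *m (P *m Q *m P^T) *m c^T) 0 0.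
  by rewrite /qf /bil -{1 2}(mulmxKV P_unit x) trmx_mul !mulmxA.
have -> : P *m Q *m P^T = diag_mx (\row_k (if k == ord0 then 1 else -1)).
  rewrite QP_sylvester; apply/matrixP => i j; rewrite !mxE.
  by case: eqVneq => [->|]; rewrite ?eqxx ?mulr1n ?mulr0n.
rewrite /time_coord /space_sqnorm -/c; clearbody c.
rewrite mul_mx_diag mxE big_ord_recl -sumrN !mxE eqxx.
congr (_ + _); first by rewrite mulr1 expr2.
by apply: eq_bigr => k _; rewrite !mxE eq_sym (negPf (neq_lift _ _)) mulrN1 mulNr expr2.
Qed.

Lemma isotropic_time_coord_neq0 u :
  qf Q u = 0 -> u != 0 -> time_coord u != 0.
Proof.
move=> qu0; apply: contraNneq => tu0.
have Su0 : space_sqnorm u = 0.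
  by apply/eqP; move: qu0; rewrite qf_coord tu0 expr0n sub0r => /eqP; rewrite oppr_eq0.
apply/eqP/normr0_eq0/eqP; rewrite -sqrf_eq0 eq_le sqr_ge0 andbT.
by have := norm_sqr_le_coord u; rewrite tu0 Su0 expr0n addr0 mulr0.
Qed.

End SylvesterCoordinates.

Lemma vspace_norm_le_subZ (R : realType) n (H0 : {vspace 'rV[R]_n}) u :
  u \notin H0 -> exists2 C, 0 <= C &
    forall x a, x \in H0 -> `|x| <= C * `|x - a *: u|.
Proof.
move=> uNH0.
have H0u0 : (H0 :&: <[u]> = 0)%VS.
  apply/eqP; rewrite -subv0; apply/subvP => x /memv_capP[xH0 /vlineP[k xE]].
  rewrite memv0 xE; have [->|k0] := eqVneq k 0; first by rewrite scale0r.
  by have := memvZ k^-1 xH0; rewrite xE scalerA mulVf // scale1r (negPf uNH0).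
pose pi := daddv_pi <[u]>%VS H0.
have piH0 x : x \in H0 -> pi x = 0.
  move=> xH0; have := daddv_pi_add H0u0 (subvP (addvSl H0 <[u]>%VS) x xH0).
  by rewrite daddv_pi_id // => /(canRL (addKr x)); rewrite addNr.
have piu : pi u = u by rewrite daddv_pi_id ?memv_line // capvC.
exists (1 + n%:R * `|lin1_mx pi|); first by rewrite addr_ge0 ?mulr_ge0.
move=> x a xH0.
have normaU : `|a *: u| <= n%:R * `|lin1_mx pi| * `|x - a *: u|.
  have <- : `|(x - a *: u) *m lin1_mx pi| = `|a *: u|.
    by rewrite mul_rV_lin1 linearB linearZ /= piH0 // piu sub0r normrN.
  by rewrite mulrAC mulmx_norm_le.
rewrite mulrDl mul1r (le_trans _ (lerD (lexx _) normaU)) //.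
by rewrite -[in leLHS](subrK (a *: u) x) ler_normD.
Qed.

Section PerpendicularsNearIsotropic.
Variables (R : realType) (n : nat) (Q P : 'M[R]_n.+1).
Variables (H0 : {vspace 'rV[R]_n.+1}) (u : 'rV[R]_n.+1).
Hypotheses (symQ : Q^T = Q) (P_unit : P \in unitmx).
Hypothesis QP_sylvester : P *m Q *m P^T =
  \matrix_(i, j) (if i == j then (if i == ord0 then 1 else -1) else 0).
Hypotheses (uNH0 : u \notin H0) (qu0 : qf Q u = 0).

Lemma norm_sqr_le_qf_shift : exists2 L, 0 <= L &
  forall x a, x \in H0 -> time_coord P (x - a *: u) = 0 ->
    `|x| ^+ 2 <= L * - qf Q (x - a *: u).
Proof.
have [C C0 HC] := vspace_norm_le_subZ uNH0.
exists (C ^+ 2 * (n.+1%:R * `|P|) ^+ 2); first by rewrite mulr_ge0 ?sqr_ge0.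
move=> x a xH0 tw0; set w := x - a *: u.
apply: le_trans (_ : C ^+ 2 * `|w| ^+ 2 <= _).
  by rewrite -exprMn lerXn2r ?nnegrE ?mulr_ge0 ?HC.
rewrite -[leRHS]mulrA ler_wpM2l ?sqr_ge0 // (qf_coord P_unit QP_sylvester) tw0.
by have := norm_sqr_le_coord P_unit w; rewrite tw0 expr0n add0r sub0r opprK.
Qed.

Lemma perp_near_isotropic_spacelike : exists2 eps, 0 < eps &
  exists2 C, 0 <= C & forall x y, x \in H0 -> `|u - y| < eps ->
    bil Q x y = 0 -> `|x| ^+ 2 <= C * - qf Q x.
Proof.
have [L L0 HL] := norm_sqr_le_qf_shift.
have tu0 : time_coord P u != 0.
  apply: (isotropic_time_coord_neq0 P_unit QP_sylvester qu0).
  by apply: contraNneq uNH0 => ->; rewrite mem0v.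
set tu := `|time_coord P u|; set Kt := n.+1%:R * `|invmx P|.
have tu_gt0 : 0 < tu by rewrite normr_gt0.
set Kb := n.+1%:R ^+ 2 * `|Q|; set eps := tu / (4 * L * Kt * Kb + 1).
have K0 : 0 <= 4 * L * Kt * Kb by rewrite !mulr_ge0.
have eps_small : 4 * L * Kt * Kb * eps <= tu.
  by rewrite mulrC mulrAC ler_pdivrMr ?ltr_wpDl // ler_pM2l // lerDl.
exists eps; first by rewrite divr_gt0 ?ltr_wpDl.
exists (2 * L); first by rewrite mulr_ge0.
move=> x y xH0 uy bxy0.
set a := time_coord P x / time_coord P u.
have tw0 : time_coord P (x - a *: u) = 0 by rewrite time_coord_subZ divfK ?subrr.
have qw : - qf Q (x - a *: u) = 2 * a * bil Q x u - qf Q x.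
  by rewrite qf_subZ // qu0; ring.
have ta : `|a| * tu <= Kt * `|x|.
  by rewrite normrM normfV mulfVK ?normr_eq0 // time_coord_norm_le.
have bxu : `|bil Q x u| <= Kb * `|x| * `|u - y|.
  by rewrite -[bil Q x u]subr0 -bxy0 -bilBr -mulrA bil_norm_le.
have ab : `|a| * `|bil Q x u| * tu <= Kt * Kb * `|x| ^+ 2 * eps.
  rewrite mulrAC (_ : _ * eps = (Kt * `|x|) * (Kb * `|x| * eps)); last by ring.
  apply: ler_pM ta _; rewrite ?mulr_ge0 ?(ltW tu_gt0) //.
  by apply: (le_trans bxu); rewrite ler_wpM2l ?mulr_ge0 // ltW.
have cross : 2 * L * (`|a| * `|bil Q x u|) <= `|x| ^+ 2 / 2.
  rewrite -(ler_pM2r tu_gt0).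
  have := sqr_ge0 `|x|; nra.
have := HL x a xH0 tw0; rewrite qw.
have : a * bil Q x u <= `|a| * `|bil Q x u| by rewrite -normrM ler_norm.
nra.
Qed.

End PerpendicularsNearIsotropic.

Lemma discrete_subset_compact_finite (R : realType) n (A K : set 'rV[R]_n) :
  discrete_subset A -> compact K -> finite_set (A `&` K).
Proof.
move=> /choice[V HV]; rewrite compact_cover => /(_ _ K (interior \o V)) [||D _ cov].
- by move=> p _; exact: open_interior.
- by move=> x Kx; exists x => //; exact: (HV x).1.
have fin : finite_set (\bigcup_(p in [set` D]) (A `&` V p)).
  by apply: bigcup_finite => [|p _]; [exact: finite_fset | exact: (HV p).2].
apply: sub_finite_set fin.
by move=> x [Ax /cov[p Dp /interior_subset Vpx]]; exists p.
Qed.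

Lemma discrete_subset_bounded_finite (R : realType) n (A : set 'rV[R]_n) C :
  discrete_subset A -> finite_set (A `&` [set x | `|x| <= C]).
Proof.
move=> hA; apply: discrete_subset_compact_finite hA _.
have -> : [set x : 'rV[R]_n | `|x| <= C] = closed_ball_ Num.norm 0 C.
  by apply/seteqP; split => x; rewrite /closed_ball_ /= sub0r normrN.
apply: bounded_closed_compact; last exact: closed_closed_ball_.
exists C; split=> [|N CN x]; first exact: num_real.
by rewrite /closed_ball_ /= sub0r normrN => /le_trans; apply; exact: ltW.
Qed.

Theorem corollary5p15 (R : realType) (d : nat) (hd : (1 <= d)%N)
  (Q : 'M[R]_(d.+1)) (hQ : signature_1_d Q)
  (A : set 'rV[R]_(d.+1)) (hA : discrete_subset A)
  (M : R) (hM : 0 < M) (hqA : forall x, A x -> - M <= qf Q x)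
  (H0 : {vspace 'rV[R]_(d.+1)}) (hH0 : H0 != fullv)
  (hAH0 : forall x, A x -> x \in H0)
  (u : 'rV[R]_(d.+1)) (hu : u \notin H0) (hqu : qf Q u = 0) :
  exists U : set 'rV[R]_(d.+1),
    open U /\ U u /\ finite_set [set x | A x /\ U `&` qperp Q x !=set0].
Proof.
have [symQ [P [P_unit QP_sylvester]]] := hQ.
have [eps eps_gt0 [C C0 HC]] :=
  perp_near_isotropic_spacelike symQ P_unit QP_sylvester hu hqu.
exists (ball u eps); split; first exact: ball_open.
split; first exact: ballxx.
apply: sub_finite_set (discrete_subset_bounded_finite (Num.sqrt (C * M)) hA).
move=> x [Ax [y [uy xy]]]; split => //=.
have normx : `|x| ^+ 2 <= C * - qf Q x.
  by apply: HC (hAH0 x Ax) _ xy; rewrite -ball_normE in uy.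
rewrite -[leLHS]normr_id -sqrtr_sqr ler_wsqrtr // (le_trans normx) //.
by apply: ler_wpM2l => //; rewrite lerNl hqA.
Qed.
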